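(* Let $\mathcal{H}$ be a Hilbert space with a unit vector $\xi$ and expectation functional $\phi(T)=\langle T\xi,\xi\rangle$. Let $P,Q$ be Boolean independent orthogonal projections on $(\mathcal{H},\xi)$ with $\phi(P)=1-p$ and $\phi(Q)=1-q$, where $p,q\in[0,1]$. Then $\phi(P\vee Q)=1-r$, where $r\in[0,1]$ is determined by $$r^{-1}-1=(p^{-1}-1)+(q^{-1}-1).$$
   Context: Noncommutative random variables are self-adjoint operators on $\mathcal{H}$, with distribution taken with respect to $\phi$. Two families of bounded self-adjoint operators are Boolean independent with respect to $\phi$ if, denoting by $\mathcal{A}$ and $\mathcal{B}$ the (non-unital) $*$-algebras they generate, one has $\phi(c_1c_2\cdots c_n)=\phi(c_1)\phi(c_2)\cdots\phi(c_n)$ whenever each $c_i$ lies in $\mathcal{A}$ or in $\mathcal{B}$ and consecutive $c_i$ alternate between $\mathcal{A}$ and $\mathcal{B}$. For projections $P,Q$, $P\vee Q$ denotes the spectral (Ando) max, i.e. the projection $I-\big((I-P)\wedge(I-Q)\big)$, where $\wedge$ is the orthogonal projection onto the intersection of ranges; equivalently the orthogonal projection onto the closed span of the ranges of $P$ and $Q$. Convention: $0^{-1}=+\infty$ and $(+\infty)^{-1}=0$. *)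

From HB Require Import structures.
From mathcomp Require Import all_boot all_order all_algebra.
From mathcomp Require Import complex.
From mathcomp Require Import reals constructive_ereal.
Set Implicit Arguments. Unset Strict Implicit. Unset Printing Implicit Defensive.
Import Order.TTheory GRing.Theory Num.Theory.
Local Open Scope ring_scope.

Section Hilbert.
Variable R : realType.
Local Notation C := (complex R).
Variable H : lmodType C.
Variable ip : H -> H -> C.

Definition hnorm (x : H) : R := Num.sqrt (complex.Re (ip x x)).

Definition is_hilbert : Prop :=
  [/\ (forall (a : C) (x y z : H), ip (a *: x + y) z = a * ip x z + ip y z),
      (forall x y : H, ip y x = (ip x y)^*),
      (forall x : H, 0 <= ip x x),
      (forall x : H, ip x x = 0 -> x = 0) &
      (forall u : nat -> H,
         (forall e : R, 0 < e -> exists N, forall m n, (N <= m)%N -> (N <= n)%N ->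
              hnorm (u m - u n) < e) ->
         exists l : H, forall e : R, 0 < e -> exists N, forall n, (N <= n)%N ->
              hnorm (u n - l) < e)].

Definition bounded_op (T : H -> H) : Prop :=
  (forall (a : C) (x y : H), T (a *: x + y) = a *: T x + T y) /\
  exists M : R, forall x, hnorm (T x) <= M * hnorm x.

Definition is_adjoint (T S : H -> H) : Prop :=
  forall x y : H, ip (T x) y = ip x (S y).

Definition self_adjoint (T : H -> H) : Prop := is_adjoint T T.

Definition is_proj (P : H -> H) : Prop :=
  [/\ bounded_op P, self_adjoint P & forall x, P (P x) = P x].

(* non-unital *-algebra generated by a family G of operators *)
Inductive gen_alg (G : (H -> H) -> Prop) : (H -> H) -> Prop :=
  | ga_gen T : G T -> gen_alg G T
  | ga_add S T : gen_alg G S -> gen_alg G T -> gen_alg G (fun x => S x + T x)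
  | ga_scale (a : C) T : gen_alg G T -> gen_alg G (fun x => a *: T x)
  | ga_comp S T : gen_alg G S -> gen_alg G T -> gen_alg G (S \o T)
  | ga_adj T S : gen_alg G T -> is_adjoint T S -> gen_alg G S.

Definition phi (xi : H) (T : H -> H) : C := ip (T xi) xi.

(* product c_1 c_2 ... c_n of a word (composition, c_1 outermost) *)
Definition word_op (s : seq (bool * (H -> H))) : H -> H :=
  foldr (fun c acc => c.2 \o acc) id s.

(* Boolean independence of the families GA, GB w.r.t. phi_xi:
   words alternating between the generated algebras A (label true)
   and B (label false) factorize. *)
Definition boolean_indep (xi : H) (GA GB : (H -> H) -> Prop) : Prop :=
  forall s : seq (bool * (H -> H)),
    (forall i, (i < size s)%N ->
        gen_alg (if (nth (true, id) s i).1 then GA else GB) (nth (true, id) s i).2) ->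
    (forall i, (i.+1 < size s)%N ->
        (nth (true, id) s i).1 != (nth (true, id) s i.+1).1) ->
    phi xi (word_op s) = \prod_(c <- s) phi xi c.2.

Definition in_closure (S : H -> Prop) (x : H) : Prop :=
  forall e : R, 0 < e -> exists y, S y /\ hnorm (x - y) < e.

(* P \/ Q : the orthogonal projection onto the closed span of ran P and ran Q
   (the span of two subspaces being their sum) *)
Definition is_proj_join (P Q J : H -> H) : Prop :=
  is_proj J /\
  forall x, (exists y, x = J y) <->
            in_closure (fun z => exists a b, z = P a + Q b) x.

End Hilbert.

Definition inv_ext (R : realType) (x : R) : \bar R :=
  if x == 0 then +oo%E else (x^-1)%:E.

(* Boolean independence makes phi(PQ), phi(QP) and phi(QPQ) factorize, and
   expanding |PQ xi - phi(Q) P xi|^2 in these words shows PQ xi = phi(Q) P xi;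
   symmetrically QP xi = phi(P) Q xi.  Hence y = al P xi + be Q xi, with
   al + be phi(Q) = 1 = be + al phi(P), has the same images as xi under P and Q,
   so xi - y is orthogonal to ran P + ran Q.  Therefore (P \/ Q) xi = y and
   phi(P \/ Q) = al phi(P) + be phi(Q) = 1 - pq / (p + q - pq). *)

From HB Require Import structures.
From mathcomp Require Import all_boot all_order all_algebra.
From mathcomp Require Import complex.
From mathcomp Require Import reals constructive_ereal.
From mathcomp Require Import ring lra.
Set Implicit Arguments.
Unset Strict Implicit.
Unset Printing Implicit Defensive.

Import Order.TTheory GRing.Theory Num.Theory.
Local Open Scope ring_scope.
Local Open Scope complex_scope.

Section LinearMaps.
Variables (K : pzRingType) (U V : lmodType K) (f : U -> V).
Hypothesis f_lin : forall a x y, f (a *: x + y) = a *: f x + f y.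

Lemma lin0 : f 0 = 0.
Proof.
have := f_lin 1 0 0; rewrite !scale1r addr0 => h.
by apply/(addrI (f 0)); rewrite addr0 -h.
Qed.

Lemma linD x y : f (x + y) = f x + f y.
Proof. by rewrite -[x]scale1r f_lin !scale1r. Qed.

Lemma linZ a x : f (a *: x) = a *: f x.
Proof. by rewrite -[a *: x]addr0 f_lin lin0 addr0. Qed.

Lemma linB x y : f (x - y) = f x - f y.
Proof. by rewrite linD -scaleN1r linZ scaleN1r. Qed.

End LinearMaps.

Section BooleanJoinParameter.
Variable R : realFieldType.

(* At p = q = 0 the junk value 0 / 0 = 0 is the correct r. *)
Definition boolean_join_param (p q : R) : R := p * q / (p + q - p * q).

Variables p q : R.
Hypotheses (hp : 0 <= p <= 1) (hq : 0 <= q <= 1).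

Lemma boolean_join_param0l : boolean_join_param 0 q = 0.
Proof. by rewrite /boolean_join_param !mul0r. Qed.

Lemma boolean_join_denom_gt0 : p != 0 -> 0 < p + q - p * q.
Proof. by move: hp hq => /andP[? ?] /andP[? ?]; rewrite neq_lt => /orP[]; nra. Qed.

Lemma boolean_join_param_itv : 0 <= boolean_join_param p q <= 1.
Proof.
have [->|p_neq0] := eqVneq p 0; first by rewrite boolean_join_param0l lexx ler01.
have d_gt0 := boolean_join_denom_gt0 p_neq0.
move: hp hq => /andP[? ?] /andP[? ?].
rewrite /boolean_join_param divr_ge0 ?mulr_ge0 ?(ltW d_gt0) //= ler_pdivrMr // mul1r; nra.
Qed.

Lemma boolean_join_coeffs : exists al be : R,
  [/\ al + be * (1 - q) = 1, be + al * (1 - p) = 1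
    & al * (1 - p) + be * (1 - q) = 1 - boolean_join_param p q].
Proof.
have [->|p_neq0] := eqVneq p 0.
  by exists 1, 0; rewrite boolean_join_param0l; split; ring.
have d_neq0 := lt0r_neq0 (boolean_join_denom_gt0 p_neq0).
exists (q / (p + q - p * q)), (p / (p + q - p * q)).
by rewrite /boolean_join_param; split; field.
Qed.

End BooleanJoinParameter.

Lemma inv_ext_boolean_join_param (R : realType) (p q : R) :
  0 <= p <= 1 -> 0 <= q <= 1 ->
  (inv_ext (boolean_join_param p q) - 1%:E
    = (inv_ext p - 1%:E) + (inv_ext q - 1%:E))%E.
Proof.
move=> hp hq; rewrite /inv_ext.
have [->|p_neq0] := eqVneq p 0; first by rewrite boolean_join_param0l eqxx; case: ifP.
have [->|q_neq0] := eqVneq q 0.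
  by rewrite /boolean_join_param !(mulr0, mul0r) eqxx.
have d_neq0 := lt0r_neq0 (boolean_join_denom_gt0 hp hq p_neq0).
have r_neq0 : boolean_join_param p q != 0 by rewrite !mulf_neq0 ?invr_eq0.
rewrite (negbTE r_neq0) -!EFinB -EFinD.
by congr (_%:E); rewrite /boolean_join_param; field; rewrite p_neq0 q_neq0 d_neq0.
Qed.

Section InnerProduct.
Variables (R : realType) (H : lmodType R[i]) (ip : H -> H -> R[i]).
Hypothesis hH : is_hilbert ip.

Lemma ip_linear a x y z : ip (a *: x + y) z = a * ip x z + ip y z.
Proof. by case: hH. Qed.

Lemma ip_conj x y : ip y x = (ip x y)^*.
Proof. by case: hH. Qed.

Lemma ip_ge0 x : 0 <= ip x x.
Proof. by case: hH. Qed.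

Lemma ip_eq0 x : ip x x = 0 -> x = 0.
Proof. by case: hH => _ _ _ /(_ x). Qed.

Lemma ip0l z : ip 0 z = 0.
Proof.
have := ip_linear 1 0 0 z; rewrite scale1r addr0 mul1r => h.
by apply/(addrI (ip 0 z)); rewrite addr0 -h.
Qed.

Lemma ipDl x y z : ip (x + y) z = ip x z + ip y z.
Proof. by rewrite -[x]scale1r ip_linear scale1r mul1r. Qed.

Lemma ipZl a x z : ip (a *: x) z = a * ip x z.
Proof. by rewrite -[a *: x]addr0 ip_linear ip0l addr0. Qed.

Lemma ipBl x y z : ip (x - y) z = ip x z - ip y z.
Proof. by rewrite ipDl -scaleN1r ipZl mulN1r. Qed.

Lemma ipDr x y z : ip z (x + y) = ip z x + ip z y.
Proof. by rewrite ip_conj ipDl rmorphD /= -!ip_conj. Qed.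

Lemma ipZr a x z : ip z (a *: x) = a^* * ip z x.
Proof. by rewrite ip_conj ipZl rmorphM /= -ip_conj. Qed.

Lemma ipBr x y z : ip z (x - y) = ip z x - ip z y.
Proof. by rewrite ipDr -scaleN1r ipZr rmorphN rmorph1 mulN1r. Qed.

Lemma ip_pythagoras v z : ip v z = 0 -> ip (v - z) (v - z) = ip v v + ip z z.
Proof.
by move=> vz; rewrite ipBl !ipBr vz [ip z v]ip_conj vz conjc0 subr0 sub0r opprK.
Qed.

Lemma hnorm0 : hnorm ip 0 = 0.
Proof. by rewrite /hnorm ip0l sqrtr0. Qed.

Lemma hnorm_eq0 x : hnorm ip x = 0 -> x = 0.
Proof.
move/eqP; rewrite sqrtr_eq0 => Re_le0; apply/ip_eq0/eqP.
by rewrite eq_le ip_ge0 andbT lecE (ger0_Im (ip_ge0 x)) eqxx.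
Qed.

Lemma hnorm_le_orth v z : ip v z = 0 -> hnorm ip v <= hnorm ip (v - z).
Proof.
move=> vz; have := ip_ge0 (v - z); rewrite lecE => /andP[_ Re_ge0].
rewrite /hnorm ler_sqrt // ip_pythagoras //.
by have := lerDl (ip v v) (ip z z); rewrite ip_ge0 lecE => /andP[].
Qed.

Lemma closure_orth_eq0 (S : H -> Prop) v :
  in_closure ip S v -> (forall z, S z -> ip v z = 0) -> v = 0.
Proof.
move=> v_cl v_orth; apply: hnorm_eq0; apply/eqP; rewrite eq_le sqrtr_ge0 andbT.
rewrite leNgt; apply/negP => /v_cl[z [Sz]].
by rewrite ltNge hnorm_le_orth ?v_orth.
Qed.

Lemma phi_conj (T : H -> H) xi : self_adjoint ip T -> (phi ip xi T)^* = phi ip xi T.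
Proof. by move=> T_sa; rewrite /phi -ip_conj T_sa. Qed.

Section BooleanWords.
Variables (xi : H) (GA GB : (H -> H) -> Prop).
Hypothesis hind : boolean_indep ip xi GA GB.

Lemma boolean_indep2 (b : bool) S T :
  gen_alg ip (if b then GA else GB) S -> gen_alg ip (if b then GB else GA) T ->
  phi ip xi (S \o T) = phi ip xi S * phi ip xi T.
Proof.
move=> hS hT; have := @hind [:: (b, S); (~~ b, T)].
rewrite !big_cons big_nil mulr1; apply.
- by case: b hS hT => hS hT [|[|i]].
- by case: (b) => -[|[|i]].
Qed.

Lemma boolean_indep3 (b : bool) S T U :
  gen_alg ip (if b then GA else GB) S -> gen_alg ip (if b then GB else GA) T ->
  gen_alg ip (if b then GA else GB) U ->
  phi ip xi (S \o T \o U) = phi ip xi S * (phi ip xi T * phi ip xi U).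
Proof.
move=> hS hT hU; have := @hind [:: (b, S); (~~ b, T); (b, U)].
rewrite !big_cons big_nil mulr1; apply.
- by case: b hS hT hU => hS hT hU [|[|[|i]]].
- by case: (b) => -[|[|[|i]]].
Qed.

End BooleanWords.

Lemma proj_absorb (P Q : H -> H) xi :
  is_proj ip P -> self_adjoint ip Q ->
  phi ip xi (P \o Q) = phi ip xi P * phi ip xi Q ->
  phi ip xi (Q \o P) = phi ip xi Q * phi ip xi P ->
  phi ip xi (Q \o P \o Q) = phi ip xi Q * (phi ip xi P * phi ip xi Q) ->
  P (Q xi) = phi ip xi Q *: P xi.
Proof.
move=> [_ P_sa PP] Q_sa PQ QP QPQ; apply/eqP; rewrite -subr_eq0; apply/eqP/ip_eq0.
(* With u = P (Q xi) and v = P xi, every Gram entry of u, v is phi of a word. *)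
have a_real := phi_conj xi P_sa; have b_real := phi_conj xi Q_sa.
have uu : ip (P (Q xi)) (P (Q xi)) = phi ip xi (Q \o P \o Q).
  by rewrite [RHS]Q_sa [LHS]P_sa PP -P_sa.
have vu : ip (P xi) (P (Q xi)) = phi ip xi (Q \o P) by rewrite -P_sa PP -Q_sa.
have uv : ip (P (Q xi)) (P xi) = phi ip xi (Q \o P).
  by rewrite ip_conj vu QP rmorphM /= a_real b_real.
have vv : ip (P xi) (P xi) = phi ip xi P by rewrite -P_sa PP.
rewrite !ipBl !ipBr !ipZl !ipZr uu uv vu vv QPQ QP.
ring.
Qed.

Section ProjectionJoin.
Variables (P Q J : H -> H).
Hypotheses (hP : is_proj ip P) (hQ : is_proj ip Q) (hJ : is_proj_join ip P Q J).

Lemma proj_join_id a b : J (P a + Q b) = P a + Q b.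
Proof.
have [[_ _ JJ] ranJ] := hJ.
have [y ->] : exists y, P a + Q b = J y.
  apply/ranJ => e e_gt0; exists (P a + Q b).
  by rewrite subrr hnorm0; split => //; exists a, b.
by rewrite JJ.
Qed.

Lemma proj_join_orth w : P w = 0 -> Q w = 0 -> J w = 0.
Proof.
move=> Pw Qw; have [[_ J_sa _] ranJ] := hJ.
have [_ P_sa _] := hP; have [_ Q_sa _] := hQ.
apply: closure_orth_eq0; first by apply/ranJ; exists w.
move=> _ [a [b ->]].
by rewrite J_sa proj_join_id ipDr -P_sa -Q_sa Pw Qw !ip0l addr0.
Qed.

Lemma proj_join_span x a b :
  P x = P (P a + Q b) -> Q x = Q (P a + Q b) -> J x = P a + Q b.
Proof.
move=> Px Qx; have [[[P_lin _] _ _] [[Q_lin _] _ _]] := (hP, hQ).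
have [[[J_lin _] _ _] _] := hJ.
rewrite -[x](subrK (P a + Q b)) (linD J_lin) proj_join_id.
by rewrite proj_join_orth ?add0r // (linB P_lin, linB Q_lin) ?Px ?Qx subrr.
Qed.

Lemma phi_proj_join xi al be :
  P (Q xi) = phi ip xi Q *: P xi -> Q (P xi) = phi ip xi P *: Q xi ->
  al + be * phi ip xi Q = 1 -> be + al * phi ip xi P = 1 ->
  phi ip xi J = al * phi ip xi P + be * phi ip xi Q.
Proof.
move=> PQ QP e1 e2; have [[[P_lin _] _ PP] [[Q_lin _] _ QQ]] := (hP, hQ).
rewrite /phi (@proj_join_span xi (al *: xi) (be *: xi)) (linZ P_lin) (linZ Q_lin).
- by rewrite ipDl !ipZl.
- by rewrite (linD P_lin) !(linZ P_lin) PP PQ scalerA -scalerDl e1 scale1r.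
- by rewrite (linD Q_lin) !(linZ Q_lin) QQ QP scalerA -scalerDl addrC e2 scale1r.
Qed.

End ProjectionJoin.

End InnerProduct.

Theorem lemma3p1 (R : realType) (H : lmodType (complex R))
  (ip : H -> H -> complex R) (hH : is_hilbert ip)
  (xi : H) (hxi : hnorm ip xi = 1)
  (P Q : H -> H) (hP : is_proj ip P) (hQ : is_proj ip Q)
  (hind : boolean_indep ip xi (fun T => T = P) (fun T => T = Q))
  (p q : R) (hp : 0 <= p <= 1) (hq : 0 <= q <= 1)
  (hphiP : phi ip xi P = (1 - p)%:C%C) (hphiQ : phi ip xi Q = (1 - q)%:C%C) :
  exists r : R, [/\ 0 <= r <= 1,
    (inv_ext r - 1%:E = (inv_ext p - 1%:E) + (inv_ext q - 1%:E))%E &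
    forall J : H -> H, is_proj_join ip P Q J -> phi ip xi J = (1 - r)%:C%C].
Proof.
exists (boolean_join_param p q); split.
- exact: boolean_join_param_itv.
- exact: inv_ext_boolean_join_param.
move=> J hJ; have [[_ P_sa _] [_ Q_sa _]] := (hP, hQ).
have inA : gen_alg ip (fun T => T = P) P by exact: ga_gen.
have inB : gen_alg ip (fun T => T = Q) Q by exact: ga_gen.
have PQ := boolean_indep2 hind (b := true) inA inB.
have QP := boolean_indep2 hind (b := false) inB inA.
have PQP := boolean_indep3 hind (b := true) inA inB inA.
have QPQ := boolean_indep3 hind (b := false) inB inA inB.
have PQ_xi := proj_absorb hH hP Q_sa PQ QP QPQ.
have QP_xi := proj_absorb hH hQ P_sa QP PQ PQP.
have [al [be [e1 e2 eJ]]] := boolean_join_coeffs hp hq.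
rewrite (phi_proj_join hH hP hQ hJ (al := al%:C) (be := be%:C) PQ_xi QP_xi).
- by rewrite hphiP hphiQ -!rmorphM -rmorphD eJ.
- by rewrite hphiQ -rmorphM -rmorphD e1.
- by rewrite hphiP -rmorphM -rmorphD e2.
Qed.
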